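(* Let $\Gamma$ be a discrete group, $\widetilde{\Gamma}=\Gamma\times\Gamma^{\rm op}$, acting on $\Gamma$ by $(g_1,g_2)\cdot y=g_1yg_2$. Let $\widetilde{\Gamma}_1\subseteq\widetilde{\Gamma}$ be the intersection of the stabilizers of an infinite family of distinct elements $(x_n)_n$ of $\Gamma$, assume $\widetilde{\Gamma}_1$ is non-trivial, and fix $x$ in the family $(x_n)_n$. Then: (1) there is a subgroup $\Gamma_1$ of $\Gamma$, depending only on $\widetilde{\Gamma}_1$ and not on the choice of $x$, such that $\widetilde{\Gamma}_1=\{(\gamma_1,x^{-1}\gamma_1^{-1}x)\mid\gamma_1\in\Gamma_1\}$; (2) letting $\mathcal M(\widetilde{\Gamma}_1)=\Gamma_1'$ be the centralizer of $\Gamma_1$ in $\Gamma$ and $\widetilde{\mathcal M}(\widetilde{\Gamma}_1)=\{(\gamma_1,\gamma_2)\mid\gamma_1\in\Gamma_1',\ \gamma_2\in x^{-1}\Gamma_1'x\}$, the orbit $\widetilde{\mathcal M}(\widetilde{\Gamma}_1)x=x(x^{-1}\mathcal M(\widetilde{\Gamma}_1)x)=\Gamma_1'x$ is the set of all elements of $\Gamma$ fixed by $\widetilde{\Gamma}_1$; explicitly, for $\gamma_1,\gamma_2\in\Gamma_1'$ and $m\in\Gamma_1'$, $(\gamma_1,x^{-1}\gamma_2x)\cdot(mx)=\gamma_1m\gamma_2x$; (3) if $\widetilde{\mathcal M}(\widetilde{\Gamma}_1^{\alpha})$, $\widetilde{\mathcal M}(\widetilde{\Gamma}_1^{\beta})$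 are two subgroups constructed as in (2) from non-trivial groups $\widetilde{\Gamma}_1^\alpha,\widetilde{\Gamma}_1^\beta$ of this type with corresponding points $x_\alpha,x_\beta$ fixed by $\widetilde{\Gamma}_1^\alpha$, $\widetilde{\Gamma}_1^\beta$ respectively, and if $\widetilde{\mathcal M}(\widetilde{\Gamma}_1^{\alpha})x_\alpha\cap\widetilde{\mathcal M}(\widetilde{\Gamma}_1^{\beta})x_\beta$ is non-empty, containing an element $m_\alpha\cdot x_\alpha=m_\beta\cdot x_\beta$ with $m_\alpha\in\widetilde{\mathcal M}(\widetilde{\Gamma}_1^{\alpha})$, $m_\beta\in\widetilde{\mathcal M}(\widetilde{\Gamma}_1^{\beta})$, then $$\widetilde{\mathcal M}(\widetilde{\Gamma}_1^{\alpha})x_\alpha\cap\widetilde{\mathcal M}(\widetilde{\Gamma}_1^{\beta})x_\beta=\big(\widetilde{\mathcal M}(\widetilde{\Gamma}_1^{\alpha})\cap\widetilde{\mathcal M}(\widetilde{\Gamma}_1^{\beta})\big)\cdot(m_\varepsilon\cdot x_\varepsilon),\quad\varepsilon=\alpha,\beta.$$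
   Context: $\Gamma^{\rm op}$ is $\Gamma$ with the opposite multiplication, so that $(g_1,g_2)\cdot y=g_1yg_2$ defines a left action of $\Gamma\times\Gamma^{\rm op}$ on $\Gamma$. For a subset $K\subseteq\widetilde{\Gamma}$ and $y\in\Gamma$, $Ky$ denotes $\{k\cdot y\mid k\in K\}$. *)

From Stdlib Require Import List.

Record is_group {G : Type} (mul : G -> G -> G) (one : G) (inv : G -> G) : Prop := {
  grp_mulA : forall a b c, mul a (mul b c) = mul (mul a b) c;
  grp_mul1g : forall a, mul one a = a;
  grp_mulg1 : forall a, mul a one = a;
  grp_mulVg : forall a, mul (inv a) a = one;
  grp_mulgV : forall a, mul a (inv a) = one }.

Definition is_infinite (I : Type) : Prop :=
  forall l : list I, exists i, ~ In i l.

Definition injective_fam {I G : Type} (xs : I -> G) : Prop :=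
  forall i j, xs i = xs j -> i = j.

Definition set_eq {T : Type} (A B : T -> Prop) : Prop := forall t, A t <-> B t.

Section GroupDefs.
Context {G : Type} (mul : G -> G -> G) (one : G) (inv : G -> G).

Definition act (g : G * G) (y : G) : G := mul (mul (fst g) y) (snd g).

Definition stab_family {I : Type} (xs : I -> G) : G * G -> Prop :=
  fun g => forall i, act g (xs i) = xs i.

Definition nontrivial_sub (K : G * G -> Prop) : Prop :=
  exists g, K g /\ g <> (one, one).

Definition is_subgroup (H : G -> Prop) : Prop :=
  H one /\ (forall a b, H a -> H b -> H (mul a b)) /\ (forall a, H a -> H (inv a)).

(* Gamma_1 : the first projection of tilde-Gamma_1 (depends only on it) *)
Definition first_proj (K : G * G -> Prop) : G -> Prop :=
  fun c => exists g, K g /\ fst g = c.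

Definition centralizer (H : G -> Prop) : G -> Prop :=
  fun m => forall h, H h -> mul m h = mul h m.

Definition Mtilde (H : G -> Prop) (x : G) : G * G -> Prop :=
  fun g => centralizer H (fst g) /\
           exists c, centralizer H c /\ snd g = mul (mul (inv x) c) x.

Definition orbit (K : G * G -> Prop) (y : G) : G -> Prop :=
  fun z => exists k, K k /\ act k y = z.

Definition fixed_points (K : G * G -> Prop) : G -> Prop :=
  fun y => forall k, K k -> act k y = y.

Definition rcoset (H : G -> Prop) (x : G) : G -> Prop :=
  fun y => exists h, H h /\ y = mul h x.

End GroupDefs.

(* If (g1, g2) fixes a point x then g2 = x^-1 g1^-1 x, so the joint stabilizer
   of the family is the graph of g1 |-> x^-1 g1^-1 x over its first projection Gamma_1, for
   every x of the family; in particular Gamma_1 is a subgroup.  A point y is fixed by all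
   (g1, x^-1 g1^-1 x) exactly when y x^-1 commutes with Gamma_1, i.e. y lies in the coset
   Gamma_1' x, and the orbit of x under M~ = Gamma_1' × x^-1 Gamma_1' x is that same coset.
   For part (3), two such cosets through a common point z are moved into each other by
   pairs (1, z^-1 y), which lie in both groups M~. *)

Section GroupTheory.

Context {G : Type} {mul : G -> G -> G} {one : G} {inv : G -> G}.
Hypothesis HG : is_group mul one inv.

Lemma mulgA a b c : mul (mul a b) c = mul a (mul b c).
Proof. symmetry; apply (grp_mulA _ _ _ HG). Qed.

Lemma mul1g a : mul one a = a.
Proof. apply (grp_mul1g _ _ _ HG). Qed.

Lemma mulg1 a : mul a one = a.
Proof. apply (grp_mulg1 _ _ _ HG). Qed.

Lemma mulVg a : mul (inv a) a = one.
Proof. apply (grp_mulVg _ _ _ HG). Qed.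

Lemma mulgV a : mul a (inv a) = one.
Proof. apply (grp_mulgV _ _ _ HG). Qed.

Lemma mulKg a b : mul (inv a) (mul a b) = b.
Proof. now rewrite <- mulgA, mulVg, mul1g. Qed.

Lemma mulKVg a b : mul a (mul (inv a) b) = b.
Proof. now rewrite <- mulgA, mulgV, mul1g. Qed.

Lemma mulgI a b c : mul a b = mul a c -> b = c.
Proof. intro E. now rewrite <- (mulKg a b), E, mulKg. Qed.

Lemma invMg a b : inv (mul a b) = mul (inv b) (inv a).
Proof. apply (mulgI (mul a b)). now rewrite mulgV, mulgA, mulKVg, mulgV. Qed.

Lemma invgK a : inv (inv a) = a.
Proof. apply (mulgI (inv a)). now rewrite mulgV, mulVg. Qed.

Lemma invg1 : inv one = one.
Proof. now rewrite <- (mul1g (inv one)), mulgV. Qed.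

Ltac gsimpl :=
  repeat rewrite ?mulgA, ?mul1g, ?mulg1, ?mulVg, ?mulgV, ?mulKg, ?mulKVg, ?invMg, ?invgK, ?invg1.
Ltac gsimpl_in H :=
  repeat rewrite ?mulgA, ?mul1g, ?mulg1, ?mulVg, ?mulgV, ?mulKg, ?mulKVg, ?invMg, ?invgK, ?invg1
    in H.

Section Centralizer.

Variable H : G -> Prop.

Lemma centralizer1 : centralizer mul H one.
Proof. intros h _. now gsimpl. Qed.

Lemma centralizerM a b :
  centralizer mul H a -> centralizer mul H b -> centralizer mul H (mul a b).
Proof.
  intros Ca Cb h Hh.
  now rewrite mulgA, Cb, <- mulgA, Ca, mulgA by exact Hh.
Qed.

Lemma centralizerV a : centralizer mul H a -> centralizer mul H (inv a).
Proof.
  intros Ca h Hh. apply (mulgI a). gsimpl.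
  rewrite <- (mulgA a h), Ca by exact Hh. now gsimpl.
Qed.

Lemma conj_centralizer_coset x :
  set_eq (fun y => exists m, centralizer mul H m /\ y = mul x (mul (mul (inv x) m) x))
         (rcoset mul (centralizer mul H) x).
Proof.
  intro y; split; intros [m [Cm ->]]; exists m; split; auto; now gsimpl.
Qed.

Lemma orbit_Mtilde x :
  set_eq (orbit mul (Mtilde mul inv H x) x) (rcoset mul (centralizer mul H) x).
Proof.
  intro y; split.
  - intros [[k1 k2] [[Ck1 [c [Cc Ek2]]] <-]]; simpl in *; subst k2.
    exists (mul k1 c); split.
    + now apply centralizerM.
    + unfold act; simpl; now gsimpl.
  - intros [m [Cm ->]]. exists (m, mul (mul (inv x) one) x); split.
    + split; [exact Cm | exists one; split; [apply centralizer1 | reflexivity]].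
    + unfold act; simpl; now gsimpl.
Qed.

End Centralizer.

Lemma act_Mtilde g1 g2 m x :
  act mul (g1, mul (mul (inv x) g2) x) (mul m x) = mul (mul (mul g1 m) g2) x.
Proof. unfold act; simpl; now gsimpl. Qed.

Lemma orbit_Mtilde_meet H1 H2 xa xb z :
  orbit mul (Mtilde mul inv H1 xa) xa z -> orbit mul (Mtilde mul inv H2 xb) xb z ->
  set_eq (fun y => orbit mul (Mtilde mul inv H1 xa) xa y /\ orbit mul (Mtilde mul inv H2 xb) xb y)
         (orbit mul (fun k => Mtilde mul inv H1 xa k /\ Mtilde mul inv H2 xb k) z).
Proof.
  intros [c [Cc Ezc]]%orbit_Mtilde [d [Cd Ezd]]%orbit_Mtilde y; cbv beta.
  rewrite (orbit_Mtilde H1 xa y), (orbit_Mtilde H2 xb y); split.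
  - intros [[c' [Cc' Ey1]] [d' [Cd' Ey2]]].
    exists (one, mul (inv z) y); split; [split; split|].
    + apply centralizer1.
    + exists (mul (inv c) c'); split.
      * now apply centralizerM; [apply centralizerV|].
      * simpl; rewrite Ezc at 1; rewrite Ey1; now gsimpl.
    + apply centralizer1.
    + exists (mul (inv d) d'); split.
      * now apply centralizerM; [apply centralizerV|].
      * simpl; rewrite Ezd at 1; rewrite Ey2; now gsimpl.
    + unfold act; simpl; now gsimpl.
  - intros [[k1 k2] [[[Ck1 [a [Ca Ea]]] [Ck1' [b [Cb Eb]]]] <-]]; simpl in *.
    split.
    + exists (mul k1 (mul c a)); split.
      * now repeat apply centralizerM.
      * unfold act; simpl; rewrite Ezc, Ea; now gsimpl.
    + exists (mul k1 (mul d b)); split.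
      * now repeat apply centralizerM.
      * unfold act; simpl; rewrite Ezd, Eb; now gsimpl.
Qed.

Lemma act_fixed_snd {g1 g2 y : G} :
  act mul (g1, g2) y = y -> g2 = mul (mul (inv y) (inv g1)) y.
Proof.
  unfold act; simpl; intro E. apply (mulgI (mul g1 y)). gsimpl_in E. gsimpl. exact E.
Qed.

Section StabilizerOfFamily.

Context {I : Type} (xs : I -> G).

Let Gt1 := stab_family mul xs.
Let Gam1 := first_proj Gt1.

Lemma stab_family_snd (i : I) {g1 g2 : G} :
  Gt1 (g1, g2) -> g2 = mul (mul (inv (xs i)) (inv g1)) (xs i).
Proof. intro Hg. exact (act_fixed_snd (Hg i)). Qed.

Lemma first_proj_stab_subgroup : is_subgroup mul one inv Gam1.
Proof.
  split; [|split].
  - exists (one, one); split; [intro i; unfold act; simpl; now gsimpl | reflexivity].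
  - intros a b [[a1 a2] [Ha <-]] [[b1 b2] [Hb <-]].
    exists (mul a1 b1, mul b2 a2); split; [|reflexivity].
    intro j; unfold act; simpl.
    rewrite (stab_family_snd j Ha), (stab_family_snd j Hb); now gsimpl.
  - intros a [[a1 a2] [Ha <-]].
    exists (inv a1, inv a2); split; [|reflexivity].
    intro j; unfold act; simpl.
    rewrite (stab_family_snd j Ha); now gsimpl.
Qed.

Lemma stab_family_graph i :
  set_eq Gt1 (fun g => exists c, Gam1 c /\ g = (c, mul (mul (inv (xs i)) (inv c)) (xs i))).
Proof.
  intros [g1 g2]; split.
  - intro Hg. exists g1; split.
    + now exists (g1, g2).
    + now rewrite (stab_family_snd i Hg).
  - intros [c [[[c1 c2] [Hc Ec]] E]]; simpl in *; subst c1.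
    injection E as -> ->.
    now rewrite (stab_family_snd i Hc) in Hc.
Qed.

Lemma fixed_points_stab_family i :
  set_eq (fixed_points mul Gt1) (rcoset mul (centralizer mul Gam1) (xs i)).
Proof.
  intro y; split.
  - intro Fy. exists (mul y (inv (xs i))); split; [|now gsimpl].
    intros h [[h1 h2] [Hh <-]]; simpl.
    pose proof (Fy _ Hh) as E. unfold act in E; simpl in E.
    rewrite (stab_family_snd i Hh) in E. gsimpl_in E.
    rewrite <- E at 1. now gsimpl.
  - intros [m [Cm ->]] [k1 k2] Hk.
    assert (Gk1 : Gam1 (inv k1)) by (apply first_proj_stab_subgroup; now exists (k1, k2)).
    unfold act; simpl; rewrite (stab_family_snd i Hk); simpl; gsimpl.
    rewrite <- (mulgA m (inv k1)), Cm by exact Gk1.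
    now gsimpl.
Qed.

End StabilizerOfFamily.

End GroupTheory.

Theorem proposition5 (G : Type) (mul : G -> G -> G) (one : G) (inv : G -> G)
  (HG : is_group mul one inv) :
  (* parts (1) and (2) *)
  (forall (I : Type) (xs : I -> G),
     is_infinite I -> injective_fam xs ->
     nontrivial_sub one (stab_family mul xs) ->
     let Gt1 := stab_family mul xs in
     let Gam1 := first_proj Gt1 in
     let M := centralizer mul Gam1 in
     is_subgroup mul one inv Gam1 /\
     (forall i, set_eq Gt1
        (fun g => exists c, Gam1 c /\ g = (c, mul (mul (inv (xs i)) (inv c)) (xs i)))) /\
     (forall i, let x := xs i in
        set_eq (orbit mul (Mtilde mul inv Gam1 x) x) (rcoset mul M x) /\
        set_eq (fun y => exists m, M m /\ y = mul x (mul (mul (inv x) m) x))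
               (rcoset mul M x) /\
        set_eq (fixed_points mul Gt1) (rcoset mul M x) /\
        (forall g1 g2 m, M g1 -> M g2 -> M m ->
           act mul (g1, mul (mul (inv x) g2) x) (mul m x)
           = mul (mul (mul g1 m) g2) x)))
  /\
  (* part (3) *)
  (forall (Ia : Type) (xa : Ia -> G) (Ib : Type) (xb : Ib -> G),
     is_infinite Ia -> injective_fam xa -> nontrivial_sub one (stab_family mul xa) ->
     is_infinite Ib -> injective_fam xb -> nontrivial_sub one (stab_family mul xb) ->
     forall (ia : Ia) (ib : Ib),
     let Ma := Mtilde mul inv (first_proj (stab_family mul xa)) (xa ia) in
     let Mb := Mtilde mul inv (first_proj (stab_family mul xb)) (xb ib) in
     forall ma mb, Ma ma -> Mb mb -> act mul ma (xa ia) = act mul mb (xb ib) ->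
     set_eq (fun y => orbit mul Ma (xa ia) y /\ orbit mul Mb (xb ib) y)
            (orbit mul (fun k => Ma k /\ Mb k) (act mul ma (xa ia))) /\
     set_eq (fun y => orbit mul Ma (xa ia) y /\ orbit mul Mb (xb ib) y)
            (orbit mul (fun k => Ma k /\ Mb k) (act mul mb (xb ib)))).
Proof.
  split.
  - intros I xs _ _ _ Gt1 Gam1 M.
    split; [exact (first_proj_stab_subgroup HG xs) | split].
    + exact (stab_family_graph HG xs).
    + intros i x; split; [|split; [|split]].
      * exact (orbit_Mtilde HG Gam1 x).
      * exact (conj_centralizer_coset HG Gam1 x).
      * exact (fixed_points_stab_family HG xs i).
      * intros g1 g2 m _ _ _; exact (act_Mtilde HG g1 g2 m x).
  - intros Ia xa Ib xb _ _ _ _ _ _ ia ib Ma Mb ma mb Hma Hmb E.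
    assert (Oa : orbit mul Ma (xa ia) (act mul ma (xa ia))) by now exists ma.
    assert (Ob : orbit mul Mb (xb ib) (act mul ma (xa ia))) by (rewrite E; now exists mb).
    split; [|rewrite <- E]; exact (orbit_Mtilde_meet HG _ _ _ _ _ Oa Ob).
Qed.
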